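(* Let $M$ be a matroid on a finite set $E$, let $\mathcal{C}$ be a family of non-spanning circuits of $M$, and let $N$ be the free erection of $M$. Suppose every cyclic flat of $M$ is a union of circuits in $\mathcal{C}$. Then every cyclic flat of $N$ is a union of circuits in $\mathcal{C}$.
   Context: A cyclic set is a union of circuits; $\emptyset$ counts as cyclic. $M$ is the truncation of $N$ if $r_N(E)=r_M(E)+1$ and $r_M(X)=\min\{r_N(X),r_M(E)\}$ for all $X$. The free erection of $M$ is the maximum, in the weak order ($M_1\preceq M_2$ iff every independent set of $M_1$ is independent in $M_2$), of the set consisting of $M$ and all $N$ whose truncation is $M$. *)

From mathcomp Require Import all_boot.
Set Implicit Arguments. Unset Strict Implicit. Unset Printing Implicit Defensive.

Record matroid (T : finType) := Matroid {
  indep : {set T} -> bool;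
  indep0 : indep set0;
  indep_sub : forall I J : {set T}, J \subset I -> indep I -> indep J;
  indep_aug : forall I J : {set T}, indep I -> indep J -> #|I| < #|J| ->
                exists2 x, x \in J :\: I & indep (x |: I)
}.

Section MatroidDefs.
Variable T : finType.
Implicit Types (M N : matroid T) (X C : {set T}).

Definition rank M X : nat := \max_(I : {set T} | (I \subset X) && indep M I) #|I|.

Definition circuit M C : Prop :=
  ~~ indep M C /\ forall x, x \in C -> indep M (C :\ x).

Definition spanning M X : Prop := rank M X = rank M setT.

Definition flat M X : Prop :=
  forall x, x \notin X -> rank M X < rank M (x |: X).

Definition union_of (F : {set {set T}}) X : Prop :=
  exists2 G : {set {set T}}, G \subset F & X = \bigcup_(C in G) C.

(* cyclic: a union of circuits (the empty set is cyclic) *)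
Definition cyclic M X : Prop :=
  exists2 G : {set {set T}}, (forall C, C \in G -> circuit M C) &
    X = \bigcup_(C in G) C.

Definition cyclic_flat M X : Prop := cyclic M X /\ flat M X.

Definition truncation_of M N : Prop :=
  rank N setT = (rank M setT).+1 /\
  forall X, rank M X = minn (rank N X) (rank M setT).

Definition weak_le (M1 M2 : matroid T) : Prop :=
  forall I, indep M1 I -> indep M2 I.

(* the set consisting of M and all N whose truncation is M
   (matroids are identified when they have the same independent sets) *)
Definition erection_cand M N : Prop :=
  (forall I, indep N I = indep M I) \/ truncation_of M N.

Definition free_erection M N : Prop :=
  erection_cand M N /\ forall N', erection_cand M N' -> weak_le N' N.

End MatroidDefs.

From mathcomp Require Import all_boot zify.

(* It suffices that every x in a cyclic flat X of the free erection N
   lies in a cyclic flat of M contained in X, since the latter is a union of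
   members of calC.  If N = M there is nothing to do, and if X = E it suffices
   that every circuit of N through x contains a circuit of M through x.  For a
   proper cyclic flat X of N pick a circuit C of N with x in C ⊆ X; as
   r_N(X) <= r(M), C is also a circuit of M.  If some circuit D of M with
   x in D ⊆ X has |D| <= r(M), the M-closure of D is a cyclic flat of M of
   rank below r(M), hence contained in the N-closure of D and so in X.
   Otherwise all such
   circuits have r(M) + 1 elements, and declaring them independent in N yields
   another erection of M; by maximality of the free erection, C would then be
   independent in N. *)

Set Implicit Arguments. Unset Strict Implicit. Unset Printing Implicit Defensive.

Section Covers.
Variable T : finType.
Implicit Types X : {set T}.

Lemma bigcup_cover (P : pred {set T}) X :
  (forall x, x \in X -> exists2 C, P C & (x \in C) && (C \subset X)) ->
  X = \bigcup_(C in [set C | P C && (C \subset X)]) C.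
Proof.
move=> covX; apply/setP => x; apply/idP/bigcupP => [/covX[C PC /andP[xC sCX]]|[C]].
  by exists C => //; rewrite inE PC.
by rewrite inE => /andP[_ /subsetP]; apply.
Qed.

Lemma union_of_cover (F : {set {set T}}) X :
  (forall x, x \in X -> exists2 C, C \in F & (x \in C) && (C \subset X)) ->
  union_of F X.
Proof.
move=> covX; exists [set C | (C \in F) && (C \subset X)]; last exact: bigcup_cover.
by apply/subsetP => C; rewrite inE => /andP[].
Qed.

End Covers.

Section Matroid.
Variables (T : finType) (M : matroid T).
Implicit Types (S X Y B I D : {set T}).

Definition circuitb D := ~~ indep M D && [forall x in D, indep M (D :\ x)].

Lemma circuitP D : reflect (circuit M D) (circuitb D).
Proof.
by apply: (iffP andP) => [[dD /forall_inP]|[dD /forall_inP]].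
Qed.

Lemma cyclic_coverP X :
  cyclic M X <-> forall x, x \in X -> exists2 D, circuit M D & (x \in D) && (D \subset X).
Proof.
split=> [[G cG ->] x /bigcupP[D DG xD]|covX].
  by exists D; [apply: cG | rewrite xD (bigcup_sup D DG)].
exists [set D | circuitb D && (D \subset X)].
  by move=> D; rewrite inE => /andP[/circuitP].
by apply: bigcup_cover => x /covX[D /circuitP]; exists D.
Qed.

Lemma rank_le_card X : rank M X <= #|X|.
Proof. by apply/bigmax_leqP => I /andP[sIX _]; apply: subset_leq_card. Qed.

Lemma indep_leq_rank X I : I \subset X -> indep M I -> #|I| <= rank M X.
Proof. by move=> sIX iI; apply: leq_bigmax_cond; rewrite sIX. Qed.

Lemma rank_indep_card_le (n : nat) X :
  (forall I, indep M I -> #|I| <= n) -> rank M X <= n.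
Proof. by move=> le_n; apply/bigmax_leqP => I /andP[_ /le_n]. Qed.

Definition basis_of X B : Prop :=
  [/\ B \subset X, indep M B & forall z, z \in X :\: B -> ~~ indep M (z |: B)].

Lemma rank_basis X B : basis_of X B -> rank M X = #|B|.
Proof.
move=> [sBX iB maxB]; apply/eqP; rewrite eqn_leq indep_leq_rank // andbT.
apply/bigmax_leqP => I /andP[sIX iI]; rewrite leqNgt; apply/negP => ltBI.
have [x xIB ixB] := indep_aug iB iI ltBI.
by have /negP := maxB x (subsetP (setSD B sIX) x xIB).
Qed.

Lemma basis_extend X I : I \subset X -> indep M I ->
  exists2 B : {set T}, I \subset B & basis_of X B.
Proof.
move=> sIX iI; pose P (B : {set T}) := [&& I \subset B, B \subset X & indep M B].
have [|B /and3P[sIB sBX iB] maxB] := @arg_maxnP _ I P (fun B => #|B|).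
  by rewrite /P subxx sIX iI.
exists B => //; split=> // z /setDP[zX zB]; apply/negP => izB.
have := maxB (z |: B); rewrite cardsU1 zB /P izB subUset sub1set zX sBX.
by rewrite (subset_trans sIB (subsetU1 _ _)) => /(_ isT); lia.
Qed.

Lemma basis_exists X : exists B, basis_of X B.
Proof. by have [B _ bB] := basis_extend (sub0set X) (indep0 M); exists B. Qed.

Lemma rankS X Y : X \subset Y -> rank M X <= rank M Y.
Proof.
move=> sXY; have [B bB] := basis_exists X; have [sBX iB _] := bB.
by rewrite (rank_basis bB) (indep_leq_rank (subset_trans sBX sXY)).
Qed.

Lemma rank_indep I : indep M I -> rank M I = #|I|.
Proof. by move=> iI; apply/eqP; rewrite eqn_leq rank_le_card indep_leq_rank. Qed.

Lemma rank_lt_card D : ~~ indep M D -> rank M D < #|D|.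
Proof.
move=> dD; have [B bB] := basis_exists D; have [sBD iB _] := bB.
rewrite (rank_basis bB) proper_card // properEneq sBD andbT.
by apply: contraNneq dD => <-.
Qed.

Lemma fundamental_circuit S x : indep M S -> ~~ indep M (x |: S) ->
  exists2 D, circuit M D & (x \in D) && (D \subset x |: S).
Proof.
move=> iS dxS; pose P (D : {set T}) := (D \subset x |: S) && ~~ indep M D.
have [|D /andP[sD dD] minD] := @arg_minnP _ (x |: S) P (fun D => #|D|).
  by rewrite /P subxx.
have xD : x \in D.
  apply: contraNT dD => xD; apply: indep_sub iS; apply/subsetP => y yD.
  by move: (subsetP sD y yD); rewrite in_setU1 => /predU1P[eyx|//]; rewrite -eyx yD in xD.
exists D; last by rewrite xD sD.
split=> // y yD; apply: contraT => dDy.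
have := minD (D :\ y); rewrite /P dDy (subset_trans (subsetDl _ _) sD).
by rewrite (cardsD1 y D) yD => /(_ isT); lia.
Qed.

Lemma circuit_card_le D : circuit M D -> #|D| <= (rank M setT).+1.
Proof.
case=> dD iDx; have [x xD] : {x | x \in D}.
  by apply/sigW/set0Pn; apply: contraNneq dD => ->; apply: indep0.
rewrite (cardsD1 x D) xD ltnS.
exact: indep_leq_rank (subsetT _) (iDx x xD).
Qed.

Definition cl S := [set y | rank M (y |: S) == rank M S].

Lemma mem_cl S y : (y \in cl S) = (rank M (y |: S) == rank M S).
Proof. by rewrite inE. Qed.

Lemma subset_cl S : S \subset cl S.
Proof. by apply/subsetP => y yS; rewrite mem_cl (setUidPr _) // sub1set. Qed.

Lemma cl_basisE S B y : basis_of S B -> y \notin B ->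
  (y \in cl S) = ~~ indep M (y |: B).
Proof.
move=> bB yB; have [sBS iB maxB] := bB; rewrite mem_cl (rank_basis bB).
apply/eqP/idP => [ryS | dyB].
  apply/negP => iyB; have := indep_leq_rank (setUS [set y] sBS) iyB.
  by rewrite ryS cardsU1 yB; lia.
apply: rank_basis; split=> // [|z]; first exact: subset_trans sBS (subsetU1 y S).
rewrite in_setD in_setU1 => /andP[zB /predU1P[->|zS]] //.
by apply: maxB; rewrite in_setD zB zS.
Qed.

Lemma basis_cl S B : basis_of S B -> basis_of (cl S) B.
Proof.
move=> bB; have [sBS iB _] := bB; split=> // [|z /setDP[zS zB]].
  exact: subset_trans sBS (subset_cl S).
by rewrite -(cl_basisE bB zB).
Qed.

Lemma rank_cl S : rank M (cl S) = rank M S.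
Proof.
by have [B bB] := basis_exists S; rewrite (rank_basis bB) (rank_basis (basis_cl bB)).
Qed.

Lemma clS S X : S \subset X -> cl S \subset cl X.
Proof.
move=> sSX; apply/subsetP => y ycl.
have [B bB] := basis_exists S; have [sBS iB _] := bB.
have [B' sBB' bB'] := basis_extend (subset_trans sBS sSX) iB.
have [yB' | yB'] := boolP (y \in B').
  by have [sB'X _ _] := bB'; apply: (subsetP (subset_cl X)); apply: (subsetP sB'X).
have yB : y \notin B by apply: contra yB'; apply: (subsetP sBB').
rewrite (cl_basisE bB yB) in ycl; rewrite (cl_basisE bB' yB').
by apply: contra ycl; apply: indep_sub; apply: setUS.
Qed.

Lemma flat_clP X : flat M X <-> cl X \subset X.
Proof.
split=> [flatX | sclX x xX].
  apply/subsetP => y ycl; apply: contraT => yX.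
  by have := flatX y yX; rewrite ltn_neqAle eq_sym -mem_cl ycl.
rewrite ltn_neqAle rankS ?subsetU1 // andbT eq_sym -mem_cl.
exact: contra (subsetP sclX x) xX.
Qed.

Lemma flat_cl S : flat M (cl S).
Proof.
apply/flat_clP/subsetP => y; rewrite !mem_cl rank_cl => /eqP ry.
rewrite eqn_leq (rankS (subsetU1 y S)) andbT -ry.
by apply: rankS; apply: setUS; apply: subset_cl.
Qed.

Lemma cl_sub_flat S X : flat M X -> S \subset X -> cl S \subset X.
Proof. by move=> /flat_clP sclX sSX; apply: subset_trans (clS sSX) sclX. Qed.

Lemma cl_fundamental_circuit S y : y \in cl S -> y \notin S ->
  exists2 D, circuit M D & (y \in D) && (D \subset y |: S).
Proof.
move=> ycl yS; have [B bB] := basis_exists S; have [sBS iB _] := bB.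
have yB : y \notin B by apply: contra yS; apply: (subsetP sBS).
rewrite (cl_basisE bB yB) in ycl.
have [D cD /andP[yD sD]] := fundamental_circuit iB ycl.
by exists D; rewrite // yD (subset_trans sD) // setUS.
Qed.

Lemma cyclic_cl S : cyclic M S -> cyclic M (cl S).
Proof.
move=> /cyclic_coverP covS; apply/cyclic_coverP => y ycl.
have [yS | yS] := boolP (y \in S).
  have [D cD /andP[yD sDS]] := covS y yS.
  by exists D; rewrite // yD (subset_trans sDS (subset_cl S)).
have [D cD /andP[yD sD]] := cl_fundamental_circuit ycl yS.
by exists D; rewrite // yD (subset_trans sD) // subUset sub1set ycl subset_cl.
Qed.

Lemma circuit_cyclic D : circuit M D -> cyclic M D.
Proof. by move=> cD; apply/cyclic_coverP => x xD; exists D; rewrite // xD subxx. Qed.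

Lemma circuit_cl C x : circuit M C -> x \in C -> x \in cl (C :\ x).
Proof.
move=> [dC iCx] xC; have rCx := rank_indep (iCx x xC).
rewrite mem_cl setD1K // rCx.
have := rank_lt_card dC; have := rankS (subsetDl C [set x]).
by rewrite rCx (cardsD1 x C) xC; lia.
Qed.

Lemma flat_proper_rank X : flat M X -> X != setT -> rank M X < rank M setT.
Proof.
move=> flatX; rewrite eqEsubset subsetT /= => /subsetPn[y _ yX].
exact: leq_trans (flatX y yX) (rankS (subsetT _)).
Qed.

End Matroid.

Lemma rank_weak_le (T : finType) (M1 M2 : matroid T) X :
  weak_le M1 M2 -> rank M1 X <= rank M2 X.
Proof.
move=> le12; have [B bB] := basis_exists M1 X; have [sBX iB _] := bB.
by rewrite (rank_basis bB); apply: indep_leq_rank sBX (le12 _ iB).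
Qed.

Lemma cyclic_flat_eq_indep (T : finType) (M N : matroid T) X :
  (forall I, indep N I = indep M I) -> cyclic_flat N X -> cyclic_flat M X.
Proof.
move=> eqNM; have rNM Y : rank N Y = rank M Y.
  by apply/eqP; rewrite eqn_leq !rank_weak_le // => I; rewrite eqNM.
have cNM D : circuit N D -> circuit M D.
  by move=> [dD iDx]; split=> [|x /iDx]; rewrite -eqNM.
move=> [/cyclic_coverP covX flatX]; split=> [|x /flatX]; last by rewrite !rNM.
by apply/cyclic_coverP => x /covX[D /cNM]; exists D.
Qed.

Lemma truncation_of_indep (T : finType) (M N : matroid T) :
  (forall I, indep M I = indep N I && (#|I| <= rank M setT)) ->
  rank N setT = (rank M setT).+1 -> truncation_of M N.
Proof.
move=> indepMN rNT; split=> // X.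
have [B bB] := basis_exists M X; have [sBX iB maxB] := bB.
have leMN : weak_le M N by move=> I; rewrite indepMN => /andP[].
have := rank_weak_le X leMN; have := rankS M (subsetT X); rewrite (rank_basis bB).
have [ltBr | ] := ltnP #|B| (rank M setT); last lia.
suff -> : rank N X = #|B| by lia.
apply: rank_basis; split=> // [|z zXB]; first exact: leMN.
have /setDP[_ zB] := zXB; apply: contra (maxB z zXB) => izB.
by rewrite indepMN izB cardsU1 zB.
Qed.

Section Truncation.
Variables (T : finType) (M N : matroid T).
Hypothesis trN : truncation_of M N.
Local Notation r := (rank M setT).
Implicit Types (S X I C : {set T}).

Lemma trunc_rank X : rank M X = minn (rank N X) r.
Proof. by case: trN. Qed.

Lemma trunc_indep I : indep M I = indep N I && (#|I| <= r).
Proof.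
have rI := trunc_rank I.
apply/idP/andP => [iI | [iI le_r]].
  rewrite (rank_indep iI) in rI; split; last lia.
  by apply: contraT => /rank_lt_card; lia.
by apply: contraT => /rank_lt_card; rewrite rI (rank_indep iI); lia.
Qed.

Lemma trunc_weak_le : weak_le M N.
Proof. by move=> I; rewrite trunc_indep => /andP[]. Qed.

Lemma trunc_cl_sub S : cl N S \subset cl M S.
Proof.
by apply/subsetP => y; rewrite !mem_cl (trunc_rank S) (trunc_rank (y |: S)) => /eqP ->.
Qed.

Lemma trunc_rank_lt S : rank M S < r -> rank N S = rank M S.
Proof. by rewrite (trunc_rank S) /minn; case: ifP; rewrite ?ltnn. Qed.

Lemma trunc_cl S : rank M S < r -> cl M S \subset cl N S.
Proof.
move=> lt_r; apply/subsetP => y; rewrite !mem_cl => /eqP ryS.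
have lt_yr : rank M (y |: S) < r by rewrite ryS.
by rewrite (trunc_rank_lt lt_r) (trunc_rank_lt lt_yr) ryS.
Qed.

Lemma trunc_circuit_sub C e : circuit N C -> e \in C ->
  exists2 D, circuit M D & (e \in D) && (D \subset C).
Proof.
move=> cC eC; have := subsetP (trunc_cl_sub (C :\ e)) e (circuit_cl cC eC).
by move=> /cl_fundamental_circuit[|D]; rewrite ?setD1K ?inE ?eqxx //; exists D.
Qed.

Lemma trunc_cyclic X : cyclic N X -> cyclic M X.
Proof.
move=> /cyclic_coverP covX; apply/cyclic_coverP => x /covX[C cC /andP[xC sCX]].
have [D cD /andP[xD sDC]] := trunc_circuit_sub cC xC.
by exists D; rewrite // xD (subset_trans sDC sCX).
Qed.

Lemma trunc_circuit C : circuit N C -> #|C| <= r.+1 -> circuit M C.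
Proof.
move=> [dC iCx] le_r; split=> [|x xC]; first by rewrite trunc_indep (negbTE dC).
by rewrite trunc_indep iCx //=; have := cardsD1 x C; rewrite xC; lia.
Qed.

End Truncation.

Section Relaxation.
Variables (T : finType) (M N : matroid T) (e : T) (X : {set T}).
Local Notation r := (rank M setT).
Hypotheses (trN : truncation_of M N) (flatX : flat N X).
Hypothesis no_small_circuit :
  forall D, circuit M D -> e \in D -> D \subset X -> r < #|D|.
Implicit Types (S I J D : {set T}).

Definition relaxed D := [&& circuitb M D, e \in D & D \subset X].

Definition relax_indep I := indep N I || relaxed I.

Lemma relaxed_card D : relaxed D -> #|D| = r.+1.
Proof.
case/and3P => /circuitP cD eD sDX.
by have := circuit_card_le cD; have := no_small_circuit cD eD sDX; lia.
Qed.

Lemma relaxed_indepD1 D x : relaxed D -> x \in D -> indep M (D :\ x).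
Proof. by case/and3P => /circuitP[_ iDx] _ _; apply: iDx. Qed.

Lemma relaxedU1 S : indep M S -> #|S| = r -> e \notin S -> e |: S \subset X ->
  relaxed (e |: S).
Proof.
move=> iS cS eS seSX; have ceS : #|e |: S| = r.+1 by rewrite cardsU1 eS cS.
have deS : ~~ indep M (e |: S) by rewrite (trunc_indep trN) ceS ltnn andbF.
have [D cD /andP[eD sD]] := fundamental_circuit iS deS.
suff <- : D = e |: S by rewrite /relaxed eD (subset_trans sD seSX) !andbT; apply/circuitP.
apply/eqP; rewrite eqEcard sD ceS.
exact: no_small_circuit cD eD (subset_trans sD seSX).
Qed.

Lemma relax_indep_card I : relax_indep I -> #|I| <= r.+1.
Proof.
case/orP => [iI | /relaxed_card -> //].
by rewrite -(proj1 trN); apply: indep_leq_rank (subsetT _) iI.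
Qed.

Lemma relax_indep0 : relax_indep set0.
Proof. by rewrite /relax_indep indep0. Qed.

Lemma relax_indep_sub I J : J \subset I -> relax_indep I -> relax_indep J.
Proof.
move=> sJI /orP[iI | rI]; first by rewrite /relax_indep (indep_sub sJI iI).
have [-> | neJI] := eqVneq J I; first by rewrite /relax_indep rI orbT.
have /subsetPn[y yI yJ] : ~~ (I \subset J) by rewrite eqEsubset sJI in neJI.
have sJIy : J \subset I :\ y.
  apply/subsetP => z zJ; rewrite in_setD1 (subsetP sJI z zJ) andbT.
  by apply: contraNneq yJ => <-.
by rewrite /relax_indep (trunc_weak_le trN (indep_sub sJIy (relaxed_indepD1 rI yI))).
Qed.

Lemma relax_aug_sub_flat I J : indep N I -> relaxed J -> #|I| = r ->
  (forall x, x \in J :\: I -> ~~ indep N (x |: I)) -> I \subset X.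
Proof.
move=> iI rJ cI maxI; have /and3P[_ eJ sJX] := rJ.
apply: subset_trans (subsetUl I J) (subset_trans _ (cl_sub_flat flatX sJX)).
have bI : basis_of N (I :|: J) I.
  split=> // [|z]; first exact: subsetUl.
  rewrite in_setD in_setU => /andP[zI /orP[zI'|zJ]]; first by rewrite zI' in zI.
  by apply: maxI; rewrite in_setD zI zJ.
have r_le : r <= rank N J.
  have := indep_leq_rank (subsetDl J [set e]) (trunc_weak_le trN (relaxed_indepD1 rJ eJ)).
  by have := cardsD1 e J; rewrite eJ (relaxed_card rJ); lia.
apply/subsetP => y yIJ; rewrite mem_cl eqn_leq (rankS N (subsetU1 y J)) andbT.
have syJ : y |: J \subset I :|: J by rewrite subUset sub1set yIJ subsetUr.
by have := rankS N syJ; rewrite (rank_basis bI); lia.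
Qed.

Lemma relax_aug_relaxed I J : indep N I -> relaxed J -> #|I| = r ->
  (forall x, x \in J :\: I -> ~~ indep N (x |: I)) ->
  exists2 x, x \in J :\: I & relaxed (x |: I).
Proof.
move=> iI rJ cI maxI; have /and3P[_ eJ sJX] := rJ.
have sIX := relax_aug_sub_flat iI rJ cI maxI.
suff [x xJI [S [iS cS eS defS]]] : exists2 x, x \in J :\: I &
    exists S, [/\ indep M S, #|S| = r, e \notin S & e |: S = x |: I].
  exists x => //; rewrite -defS; apply: relaxedU1 => //.
  by have /setDP[xJ _] := xJI; rewrite defS subUset sub1set (subsetP sJX) ?sIX.
have iMI : indep M I by rewrite (trunc_indep trN) iI cI leqnn.
have [eI | eI] := boolP (e \in I); last by exists e; [rewrite in_setD eI eJ | exists I].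
have cIe : #|I :\ e|.+1 = r by have := cardsD1 e I; rewrite eI cI; lia.
have cJe : #|J :\ e| = r by have := cardsD1 e J; rewrite eJ (relaxed_card rJ); lia.
have [|x /setDP[xJe xIe] ixI] :=
  indep_aug (indep_sub (subsetDl I [set e]) iMI) (relaxed_indepD1 rJ eJ).
  by rewrite cJe -cIe.
have [xe xJ] : x != e /\ x \in J by apply/andP; rewrite -in_setD1.
exists x; first by rewrite in_setD xJ andbT; apply: contra xIe; rewrite in_setD1 xe.
exists (x |: (I :\ e)); split=> //.
- by rewrite cardsU1 xIe -cIe.
- by rewrite in_setU1 eq_sym (negbTE xe) in_setD1 eqxx.
- by rewrite setUCA setD1K.
Qed.

Lemma relax_indep_aug I J : relax_indep I -> relax_indep J -> #|I| < #|J| ->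
  exists2 x, x \in J :\: I & relax_indep (x |: I).
Proof.
move=> rI rJ ltIJ; have leJ := relax_indep_card rJ.
have iI : indep N I by case/orP: rI => // /relaxed_card; lia.
case/orP: rJ => [iJ | rJ].
  by have [x xJI ixI] := indep_aug iI iJ ltIJ; exists x; rewrite // /relax_indep ixI.
have /and3P[_ eJ _] := rJ.
have [ltIr | geIr] := ltnP #|I| r.
  have iJe := trunc_weak_le trN (relaxed_indepD1 rJ eJ).
  have [|x /setDP[xJe xI] ixI] := indep_aug iI iJe.
    by have := cardsD1 e J; rewrite eJ (relaxed_card rJ); lia.
  exists x; last by rewrite /relax_indep ixI.
  by rewrite in_setD xI (subsetP (subsetDl J [set e]) x xJe).
have cI : #|I| = r by rewrite (relaxed_card rJ) in ltIJ; lia.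
have [/exists_inP[x xJI ixI] | /exists_inP noAug] :=
  boolP [exists x in J :\: I, indep N (x |: I)].
  by exists x; rewrite // /relax_indep ixI.
have [x xJI rxI] : exists2 x, x \in J :\: I & relaxed (x |: I).
  apply: relax_aug_relaxed iI rJ cI _ => x xJI.
  by apply/negP => ixI; apply: noAug; exists x.
by exists x; rewrite // /relax_indep rxI orbT.
Qed.

Definition relax : matroid T :=
  Matroid relax_indep0 relax_indep_sub relax_indep_aug.

Lemma relax_truncation : truncation_of M relax.
Proof.
apply: truncation_of_indep => [I | ].
  rewrite /= /relax_indep (trunc_indep trN).
  have [/relaxed_card -> | _] := boolP (relaxed I); last by rewrite orbF.
  by rewrite ltnn !andbF.
apply/eqP; rewrite eqn_leq; apply/andP; split.
  by apply: rank_indep_card_le; apply: relax_indep_card.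
by rewrite -(proj1 trN); apply: rank_weak_le => I iI; rewrite /= /relax_indep iI.
Qed.

End Relaxation.

Lemma free_erection_small_circuit (T : finType) (M N : matroid T) e X C :
  free_erection M N -> truncation_of M N -> flat N X ->
  circuit N C -> circuit M C -> e \in C -> C \subset X ->
  exists2 D, circuit M D & [&& e \in D, D \subset X & #|D| <= rank M setT].
Proof.
move=> [_ maxN] trN flatX [dC _] cMC eC sCX.
have [/existsP[D /andP[/circuitP cD smallD]] | noD] :=
  boolP [exists D, circuitb M D && [&& e \in D, D \subset X & #|D| <= rank M setT]].
  by exists D.
have no_small D : circuit M D -> e \in D -> D \subset X -> rank M setT < #|D|.
  move=> cD eD sDX; rewrite ltnNge; apply: contra noD => leD.
  by apply/existsP; exists D; rewrite eD sDX leD !andbT; apply/circuitP.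
have relaxN := maxN _ (or_intror (relax_truncation trN flatX no_small)).
suff : indep N C by rewrite (negbTE dC).
apply: relaxN; rewrite /= /relax_indep /relaxed eC sCX !andbT.
by apply/orP; right; apply/circuitP.
Qed.

Lemma trunc_proper_cyclic_flat_cover (T : finType) (M N : matroid T) X x :
  free_erection M N -> truncation_of M N -> cyclic_flat N X -> X != setT ->
  x \in X -> exists2 F, cyclic_flat M F & (x \in F) && (F \subset X).
Proof.
move=> freeN trN [cycX flatX] neXT xX.
have [C cC /andP[xC sCX]] := (cyclic_coverP N X).1 cycX x xX.
have rX : rank N X <= rank M setT.
  by have := flat_proper_rank flatX neXT; rewrite (proj1 trN).
have cMC : circuit M C.
  apply: (trunc_circuit trN cC); have [_ iCx] := cC.
  have := indep_leq_rank (subset_trans (subsetDl C [set x]) sCX) (iCx x xC).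
  by have := cardsD1 x C; rewrite xC; lia.
have [D cD /and3P[xD sDX leD]] :=
  free_erection_small_circuit freeN trN flatX cC cMC xC sCX.
exists (cl M D).
  by split; [apply: cyclic_cl; apply: circuit_cyclic | apply: flat_cl].
rewrite (subsetP (subset_cl M D)) //=.
apply: subset_trans (trunc_cl trN _) (cl_sub_flat flatX sDX).
by have [dD _] := cD; have := rank_lt_card dD; lia.
Qed.

Lemma free_erection_cyclic_flat_cover (T : finType) (M N : matroid T) X x :
  free_erection M N -> cyclic_flat N X -> x \in X ->
  exists2 F, cyclic_flat M F & (x \in F) && (F \subset X).
Proof.
move=> freeN cfX xX; have [[eqNM | trN] _] := freeN.
  by exists X; rewrite ?xX ?subxx //; apply: cyclic_flat_eq_indep eqNM cfX.
have [eXT | neXT] := eqVneq X setT; last first.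
  exact: trunc_proper_cyclic_flat_cover freeN trN cfX neXT xX.
rewrite eXT in cfX *; have [cycT _] := cfX.
exists setT; rewrite ?in_setT ?subxx //.
by split=> [|y]; [apply: (trunc_cyclic trN cycT) | rewrite in_setT].
Qed.

Theorem lemma3p5 (T : finType) (M : matroid T) (calC : {set {set T}})
  (N : matroid T) :
  (forall C, C \in calC -> circuit M C /\ ~ spanning M C) ->
  free_erection M N ->
  (forall X, cyclic_flat M X -> union_of calC X) ->
  forall X, cyclic_flat N X -> union_of calC X.
Proof.
move=> _ freeN unionM X cfX; apply: union_of_cover => x xX.
have [F cfF /andP[xF sFX]] := free_erection_cyclic_flat_cover freeN cfX xX.
have [G sGC defF] := unionM F cfF.
move: xF; rewrite defF => /bigcupP[C CG xC].
exists C; first exact: subsetP sGC C CG.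
by rewrite xC (subset_trans _ sFX) // defF (bigcup_sup C CG).
Qed.
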